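(* Let $G$ be a graph, $V\subseteq V(G)$ and $k\geq 0$. If every ordering $SV$ of $V$ has a witnessing matching of size at least $k$, then the partial matching width of $V$ is at least $k/2$.
   Context: Partial matching width of $V\subseteq V(G)$: the largest integer $k$ such that for every ordering of $V$ there is a prefix $SV'$ (viewed as a set) such that $G$ has a matching of size at least $k$ each of whose edges has one endpoint in $SV'$ and the other in $V(G)\setminus SV'$. Witnessing matching: for an ordering $SV$ of $V$, a partition of $SV$ into a prefix $SV_1$ and a suffix $SV_2$ supports an edge $\{u,v\}$ if either one endpoint is in $SV_1$ and the other in $SV_2$, or one endpoint is in $V$ and the other in $V(G)\setminus V$. A matching $M$ is witnessing for $SV$ if some partition of $SV$ into a prefix and a suffix supports every edge of $M$. *)

From mathcomp Require Import all_boot.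
From mathcomp Require Import boolp.
Set Implicit Arguments. Unset Strict Implicit. Unset Printing Implicit Defensive.

Section Defs.
Variables (T : finType) (e : rel T).

Definition simple_graph : Prop := symmetric e /\ irreflexive e.

Definition is_edge (m : {set T}) : Prop :=
  exists u v, e u v /\ m = [set u; v].

Definition is_matching (M : {set {set T}}) : Prop :=
  (forall m, m \in M -> is_edge m) /\
  (forall m1 m2, m1 \in M -> m2 \in M -> m1 != m2 -> [disjoint m1 & m2]).

Definition is_ordering (V : {set T}) (s : seq T) : Prop :=
  uniq s /\ (forall x, (x \in s) = (x \in V)).

Definition crosses (A : {set T}) (m : {set T}) : Prop :=
  exists u v, m = [set u; v] /\ u \in A /\ v \notin A.

Definition cut_matching (A : {set T}) (j : nat) : Prop :=
  exists M, is_matching M /\ j <= #|M| /\ (forall m, m \in M -> crosses A m).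

Definition pmw_prop (V : {set T}) (j : nat) : Prop :=
  forall s, is_ordering V s ->
    exists i, i <= size s /\ cut_matching [set x in take i s] j.

(* partial matching width: the largest integer j with pmw_prop V j.
   pmw_prop V 0 always holds and pmw_prop V j fails for j > #|T|, so the
   largest such integer is the maximum over j <= #|T|. *)
Definition partial_matching_width (V : {set T}) : nat :=
  \max_(j < #|T|.+1 | `[< pmw_prop V j >]) j.

Definition supports (V : {set T}) (s : seq T) (i : nat) (m : {set T}) : Prop :=
  exists u v, m = [set u; v] /\
    ((u \in take i s /\ v \in drop i s) \/ (u \in V /\ v \notin V)).

Definition witnessing (V : {set T}) (s : seq T) (M : {set {set T}}) : Prop :=
  is_matching M /\
  exists i, i <= size s /\ (forall m, m \in M -> supports V s i m).

End Defs.

From mathcomp Require Import all_boot.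
From mathcomp Require Import boolp.
From mathcomp Require Import zify.

Set Implicit Arguments. Unset Strict Implicit. Unset Printing Implicit Defensive.

(** Let [M] be a matching witnessing the ordering [s] of [V] through the
    split [(take i s, drop i s)].  Since [s] is duplicate-free, an edge of [M]
    joining the two parts crosses the prefix [take i s]; every other edge of
    [M] joins [V] to its complement, i.e. crosses the full prefix
    [take (size s) s].  One of these two cut matchings has at least half of
    the edges of [M]. *)

Lemma uphalf_addn_le_or (a b : nat) : uphalf (a + b) <= a \/ uphalf (a + b) <= b.
Proof. by rewrite !leq_uphalf_double -!mul2n; lia. Qed.

Section CutMatchings.
Variables (T : finType) (e : rel T).

Lemma matching_subset (M N : {set {set T}}) :
  is_matching e M -> N \subset M -> is_matching e N.
Proof.
move=> [edgeM disjM] /subsetP sNM; split=> [m /sNM|m1 m2 /sNM m1M /sNM m2M].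
  exact: edgeM.
exact: disjM.
Qed.

Lemma matching_trivIset (M : {set {set T}}) : is_matching e M -> trivIset M.
Proof. by move=> [_ disjM]; apply/trivIsetP => m1 m2; apply: disjM. Qed.

Lemma card_matching_le (M : {set {set T}}) : is_matching e M -> #|M| <= #|T|.
Proof.
move=> matchM; have [edgeM _] := matchM.
have nonempty_edge m : m \in M -> 1 <= #|m|.
  by move=> /edgeM [u [v [_ ->]]]; apply/card_gt0P; exists u; rewrite !inE eqxx.
rewrite -sum1_card; apply: leq_trans (max_card (cover M)).
rewrite -(eqP (matching_trivIset matchM)).
exact: leq_sum nonempty_edge.
Qed.

Lemma cut_matching_subset (A : {set T}) (M N : {set {set T}}) :
  is_matching e M -> N \subset M -> {in N, forall m, crosses A m} ->
  cut_matching e A #|N|.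
Proof. by move=> matchM sNM crossN; exists N; split; first exact: matching_subset sNM. Qed.

Lemma cut_matching_leq (A : {set T}) (j j' : nat) :
  j' <= j -> cut_matching e A j -> cut_matching e A j'.
Proof.
move=> le_j'j [M [matchM [jM crossM]]].
by exists M; split=> //; split=> //; apply: leq_trans jM.
Qed.

Lemma ordering_prefix_size (V : {set T}) (s : seq T) :
  is_ordering V s -> [set x in take (size s) s] = V.
Proof. by move=> [_ sV]; apply/setP => x; rewrite inE take_size sV. Qed.

Lemma supports_crosses (V : {set T}) (s : seq T) (i : nat) (m : {set T}) :
  is_ordering V s -> supports V s i m ->
  crosses [set x in take i s] m \/ crosses V m.
Proof.
move=> [uniq_s _] [u [v [-> [[u_take v_drop]|[uV vV]]]]]; last by right; exists u, v.
left; exists u, v; split=> //; rewrite !inE; split=> //.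
apply/negP => v_take; move: uniq_s.
rewrite -(cat_take_drop i s) cat_uniq => /and3P [_ /hasP take_drop _].
by apply: take_drop; exists v.
Qed.

Lemma witnessing_cut_matching (V : {set T}) (s : seq T) (M : {set {set T}}) :
  is_ordering V s -> witnessing e V s M ->
  exists i, i <= size s /\ cut_matching e [set x in take i s] (uphalf #|M|).
Proof.
move=> ord_s [matchM [i [le_i_s suppM]]].
pose P := [set m | `[< crosses [set x in take i s] m >]].
have crossMP : {in M :&: P, forall m, crosses [set x in take i s] m}.
  by move=> m; rewrite !inE => /andP [_ /asboolP].
have crossMD : {in M :\: P, forall m, crosses [set x in take (size s) s] m}.
  move=> m; rewrite !inE (ordering_prefix_size ord_s) => /andP [not_cross mM].
  have [cross_i|//] := supports_crosses ord_s (suppM m mM).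
  by move/asboolP: not_cross.
have := uphalf_addn_le_or #|M :&: P| #|M :\: P|; rewrite cardsID => -[half_MP|half_MD].
- exists i; split=> //; apply: cut_matching_leq half_MP _.
  exact: cut_matching_subset matchM (subsetIl M P) crossMP.
- exists (size s); split=> //; apply: cut_matching_leq half_MD _.
  exact: cut_matching_subset matchM (subsetDl M P) crossMD.
Qed.

Lemma pmw_prop_le_card (V : {set T}) (j : nat) : pmw_prop e V j -> j <= #|T|.
Proof.
move=> /(_ (enum V)) [|i [_ [M [matchM [jM _]]]]].
  by split=> [|x]; rewrite ?enum_uniq ?mem_enum.
exact: leq_trans jM (card_matching_le matchM).
Qed.

Lemma pmw_prop_le_width (V : {set T}) (j : nat) :
  pmw_prop e V j -> j <= partial_matching_width e V.
Proof.
move=> pj; have jT : j < #|T|.+1 by rewrite ltnS (pmw_prop_le_card pj).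
apply: (@leq_bigmax_cond _ _ (fun i : 'I_#|T|.+1 => val i) (Ordinal jT)).
exact/asboolP.
Qed.

End CutMatchings.

Theorem proposition3 (T : finType) (e : rel T) (V : {set T}) (k : nat) :
  simple_graph e ->
  (forall s, is_ordering V s -> exists M, witnessing e V s M /\ k <= #|M|) ->
  k <= 2 * partial_matching_width e V.
Proof.
move=> _ witnessed.
rewrite mul2n -leq_uphalf_double; apply: pmw_prop_le_width => s ord_s.
have [M [witM kM]] := witnessed s ord_s.
have [i [le_i_s cutM]] := witnessing_cut_matching ord_s witM.
by exists i; split=> //; apply: cut_matching_leq (uphalf_leq kM) cutM.
Qed.
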